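(* If $Q_1,\dots,Q_n\in\mathbb{E}^d$ are affinely independent, then they have ideal general position and general position with respect to every real, additive gain graph $\Phi$ on $n$ vertices.
   Context: A real, additive gain graph $\Phi$ on $V=\{1,\dots,n\}$: finite graph with edge set $E$ (multiple edges allowed, every edge with two distinct endpoints) and gains $\phi(e;i,j)\in\mathbb{R}$ with $\phi(e;j,i)=-\phi(e;i,j)$. $S\subseteq E$ is balanced if every circle in $S$ has gain sum $0$; $c(S)$ counts components of $(V,S)$, isolated vertices included. With $\psi_{ij}(P)=d(P,Q_i)^2-d(P,Q_j)^2$, $\mathcal{H}(\Phi;\mathbf{Q})$ consists of hyperplanes $h(e)=\{P:\psi_{ij}(P)=\phi(e;i,j)\}$ for edges $e$ with endpoints $i,j$. $\mathcal{L}(\mathcal{H})$: nonempty intersections of subsets of $\mathcal{H}$ (including $\mathbb{E}^d$) ordered by reverse inclusion; $E(s)=\{e:h(e)\supseteq s\}$. Ideal general position: the points are distinct and, with $\mathbb{E}^d\subset\mathbb{P}^d$, $h_\infty$ the ideal hyperplane and $p_{ij}$ the ideal point of line $Q_iQ_j$, for every set $T$ of unordered pairs the projective span of $\{p_{ij}:\{i,j\}\in T\}$ has dimension $\min(n-c(T),d)-1$, $c(T)$ the number of components of $(\{1,\dots,n\},T)$. Balanced flat: balanced $S\subseteq E$ such that every $e\notin S$ with both endpoints in one component of $(V,S)$ makes $S\cup\{e\}$ unbalanced; rank $n-c(S)$. General position w.r.t. $\Phi$: $s\mapsto E(s)$ is a poset isomorphism from $\mathcal{L}(\mathcal{H}(\Phi;\mathbf{Q}))$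 onto the poset (by inclusion) of balanced flats of rank $\le d$. *)

From HB Require Import structures.
From mathcomp Require Import all_boot all_order all_algebra.
From mathcomp Require Import reals.
Set Implicit Arguments.
Unset Strict Implicit.
Unset Printing Implicit Defensive.
Import Order.TTheory GRing.Theory Num.Theory.
Local Open Scope ring_scope.

Definition ncomp (V : finType) (r : rel V) : nat :=
  n_comp (fun x y => r x y || r y x) (@predT V).

Definition aff_indep (R : fieldType) (d n : nat) (Q : 'I_n -> 'rV[R]_d) : Prop :=
  forall c : 'I_n -> R,
    \sum_i c i = 0 -> \sum_i c i *: Q i = 0 -> forall i, c i = 0.

(* The ideal point p_ij of the line Q_iQ_j is the
   direction Q_j - Q_i; the projective span of a set of ideal points has
   dimension (linear rank of the directions) - 1.  A set of unordered pairs
   {i,j} (i <> j) is represented by a set of ordered pairs with distinct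
   coordinates (orientation is irrelevant for span and components). *)
Definition ideal_gen_pos (R : fieldType) (d n : nat) (Q : 'I_n -> 'rV[R]_d) : Prop :=
  injective Q /\
  forall T : {set 'I_n * 'I_n},
    (forall p, p \in T -> p.1 != p.2) ->
    \rank (\sum_(p in T) <<Q p.2 - Q p.1>>)%MS
      = minn (n - ncomp (fun x y => (x, y) \in T)) d.

Section GainGraph.
(* A gain graph on V = 'I_n: finite edge type E, each edge e oriented as
   ends e = (i, j) with i <> j and gain phi e = phi(e; i, j);
   phi(e; j, i) = - phi e. *)
Variables (R : realType) (n : nat) (E : finType)
  (ends : E -> 'I_n * 'I_n) (phi : E -> R).

Definition ogain (e : E) (i j : 'I_n) : R :=
  if ends e == (i, j) then phi e
  else if ends e == (j, i) then - phi e else 0.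

(* the circle with vertex sequence vs = [v_0; ...; v_{k-1}] and edge
   sequence es, edge es_m joining v_m and v_{m+1 mod k}, inside S *)
Definition circle_in (S : {set E}) (vs : seq 'I_n) (es : seq E) : Prop :=
  [/\ (2 <= size vs)%N, size es = size vs, uniq vs & uniq es] /\
  (forall e, e \in es -> e \in S) /\
      (forall x, x \in zip es (zip vs (rot 1 vs)) ->
         (ends x.1 == x.2) || (ends x.1 == (x.2.2, x.2.1))).

Definition circle_gain (vs : seq 'I_n) (es : seq E) : R :=
  \sum_(x <- zip es (zip vs (rot 1 vs))) ogain x.1 x.2.1 x.2.2.

Definition balanced (S : {set E}) : Prop :=
  forall vs es, circle_in S vs es -> circle_gain vs es = 0.

Definition adjS (S : {set E}) : rel 'I_n :=
  fun x y => [exists e in S, (ends e == (x, y)) || (ends e == (y, x))].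

Definition balanced_flat (S : {set E}) : Prop :=
  balanced S /\
  forall e, e \notin S -> connect (adjS S) (ends e).1 (ends e).2 ->
    ~ balanced (e |: S).

Definition flat_rank (S : {set E}) : nat := n - ncomp (adjS S).

Variables (d : nat) (Q : 'I_n -> 'rV[R]_d).

Definition sqnorm (v : 'rV[R]_d) : R := \sum_k v 0 k ^+ 2.

Definition psi (i j : 'I_n) (P : 'rV[R]_d) : R :=
  sqnorm (P - Q i) - sqnorm (P - Q j).

Definition hyp (e : E) (P : 'rV[R]_d) : Prop := psi (ends e).1 (ends e).2 P = phi e.

Definition inL (s : 'rV[R]_d -> Prop) : Prop :=
  (exists F : {set E}, forall P, s P <-> (forall e, e \in F -> hyp e P)) /\
  (exists P, s P).

Definition edges_of (s : 'rV[R]_d -> Prop) (e : E) : Prop :=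
  forall P, s P -> hyp e P.

(* s |-> E(s) is a poset isomorphism from L(H) (reverse inclusion) onto the
   balanced flats of rank <= d (inclusion). *)
Definition gen_pos_wrt : Prop :=
  [/\ (forall s, inL s -> exists S : {set E},
          (forall e, e \in S <-> edges_of s e) /\
          balanced_flat S /\ (flat_rank S <= d)%N),
      (forall S : {set E}, balanced_flat S -> (flat_rank S <= d)%N ->
          exists s, inL s /\ (forall e, e \in S <-> edges_of s e)) &
      (forall s t, inL s -> inL t ->
          ((forall P, t P -> s P) <->
           (forall e, edges_of s e -> edges_of t e)))].

End GainGraph.

From HB Require Import structures.
From mathcomp Require Import all_boot all_order all_algebra.
From mathcomp Require Import reals boolp ring lra zify.
Import GRing.Theory Num.Theory.
Local Open Scope ring_scope.
Set Implicit Arguments.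
Unset Strict Implicit.

(* A point P lies on h(e), e = ij, exactly when b := (|P - Q_k|^2)_k satisfies
   phi(e; i, j) = b_i - b_j, i.e. b is a potential for the gains of the
   edges through P.  An edge set has a potential iff it is balanced (add the
   edges one at a time: an edge closing a circle is consistent by balance,
   any other one is absorbed by shifting the potential on a component), and
   potentials are unique up to a constant on each component.  Since
   |P - Q_k|^2 = |P|^2 - 2<P, Q_k> + |Q_k|^2 and affine independence lets the
   values -2<P, Q_k> + u be prescribed at will, every b in R^n is, up to an
   additive constant, of the form (|P - Q_k|^2)_k.  Hence flats correspond to
   balanced flats: an edge inside a component is forced by the potential, and
   one joining two components can be avoided by shifting the potential on
   one of them.
   For ideal general position, Q_j - Q_i is the image of e_j - e_i under
   v |-> v Q, which is injective on sum-zero vectors, so the rank of a set of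
   directions is the rank n - c(T) of the graphic matroid; n <= d + 1 makes
   the minimum with d immaterial. *)

Lemma mem_zip1 (S T : eqType) (s : seq S) (t : seq T) x :
  x \in zip s t -> x.1 \in s.
Proof.
elim: s t => [|a s IH] [|c t] //=; rewrite !inE => /orP [/eqP -> | /IH ->] //.
  by rewrite eqxx.
by rewrite orbT.
Qed.

Lemma zip_cons_rcons (T : Type) (x : T) p z :
  zip (x :: p) (rcons p z) = rcons (zip (x :: p) p) (last x p, z).
Proof. by elim: p x => [|y p IH] x //=; rewrite IH. Qed.

Lemma sum_zip_rot_sub (T : eqType) (V : zmodType) (f : T -> V) (s : seq T) :
  \sum_(x <- zip s (rot 1 s)) (f x.1 - f x.2) = 0.
Proof.
rewrite big_split /= sumrN -(big_map fst xpredT f) -(big_map snd xpredT f).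
rewrite -/(unzip1 _) -/(unzip2 _) unzip1_zip ?unzip2_zip ?size_rot //.
have rs : perm_eq (rot 1 s) s by rewrite perm_rot.
by rewrite (perm_big _ rs) subrr.
Qed.

Lemma ncomp_gt0 (V : finType) (r : rel V) (x : V) : (0 < ncomp r)%N.
Proof.
rewrite /ncomp; apply/card_gt0P.
have cs : connect_sym (fun x y => r x y || r y x).
  by apply: sym_connect_sym => a b; rewrite orbC.
by exists (fingraph.root (fun x y => r x y || r y x) x); rewrite inE /= fingraph.roots_root.
Qed.

Section GainPotential.
Variables (R : realType) (n : nat) (E : finType)
  (ends : E -> 'I_n * 'I_n) (phi : E -> R).

Definition potential (S : {set E}) (b : 'I_n -> R) :=
  forall e, e \in S -> phi e = b (ends e).1 - b (ends e).2.

Lemma ogain_potential S b e u v : potential S b -> e \in S ->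
  (ends e == (u, v)) || (ends e == (v, u)) -> ogain ends phi e u v = b u - b v.
Proof.
move=> hb eS; rewrite /ogain (hb e eS); case: eqP => [-> //|_] /= /eqP he.
by rewrite he eqxx /= opprB.
Qed.
Arguments ogain_potential {S b e u v}.

Lemma circle_gain_shift b vs es : size es = size vs ->
  circle_gain ends phi vs es =
  \sum_(x <- zip es (zip vs (rot 1 vs)))
     (ogain ends phi x.1 x.2.1 x.2.2 - (b x.2.1 - b x.2.2)).
Proof.
move=> sz; rewrite sumrB -(big_map snd xpredT (fun y => b y.1 - b y.2)).
rewrite -/(unzip2 _) unzip2_zip; last by rewrite size_zip size_rot minnn sz.
by rewrite sum_zip_rot_sub subr0.
Qed.

Lemma potential_balanced S b : potential S b -> balanced ends phi S.
Proof.
move=> hb vs es [[_ sz _ _] [esS adj]]; rewrite (circle_gain_shift b) // big_seq big1 //.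
case=> e [u v] xin; rewrite /= (ogain_potential hb (esS _ (mem_zip1 xin)) (adj _ xin)).
by rewrite subrr.
Qed.

Lemma balancedS (S1 S2 : {set E}) :
  S1 \subset S2 -> balanced ends phi S2 -> balanced ends phi S1.
Proof.
move=> sub bal vs es [h1 [h2 h3]]; apply: bal; split => //; split => // e /h2.
exact: (subsetP sub).
Qed.

Lemma adjS_sym S : symmetric (adjS ends S).
Proof. by move=> x y; apply: eq_existsb => e; rewrite orbC. Qed.

Lemma adjS_connect_sym S : connect_sym (adjS ends S).
Proof. exact/sym_connect_sym/adjS_sym. Qed.

Lemma connect_ends (S : {set E}) e : e \in S -> connect (adjS ends S) (ends e).1 (ends e).2.
Proof.
by move=> eS; apply: connect1; apply/existsP; exists e; rewrite eS -surjective_pairing eqxx.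
Qed.

Lemma potential_connect S b b' x y : potential S b -> potential S b' ->
  connect (adjS ends S) x y -> b x - b' x = b y - b' y.
Proof.
move=> hb hb' /connectP [p pth ->]; elim: p x pth => [|z p IH] x //=.
case/andP => /existsP [e /andP [eS /orP [] /eqP he]] pth; rewrite -(IH z pth);
  have := hb e eS; have := hb' e eS; rewrite he /= => h1 h2; lra.
Qed.

(* No edge of [S] leaves a component of [S]. *)
Lemma potential_shift (S : {set E}) b a c : potential S b ->
  potential S (fun x => b x + (if connect (adjS ends S) a x then c else 0)).
Proof.
move=> hb f fS; have ec := connect_ends fS.
have -> : connect (adjS ends S) a (ends f).2 = connect (adjS ends S) a (ends f).1.
  apply/idP/idP => h; last exact: connect_trans h ec.
  by apply: connect_trans h _; rewrite adjS_connect_sym.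
by rewrite (hb f fS); lra.
Qed.

Definition adj_edge (S : {set E}) (e0 : E) (x y : 'I_n) :=
  odflt e0 [pick e in S | (ends e == (x, y)) || (ends e == (y, x))].

Lemma adj_edgeP S e0 x y : adjS ends S x y ->
  adj_edge S e0 x y \in S /\
  ((ends (adj_edge S e0 x y) == (x, y)) || (ends (adj_edge S e0 x y) == (y, x))).
Proof.
rewrite /adj_edge; case: pickP => [e /andP [h1 h2] _ | none] //=.
by case/existsP => e h; have := none e; rewrite /= h.
Qed.

Fixpoint path_edges (S : {set E}) (e0 : E) (x : 'I_n) (p : seq 'I_n) : seq E :=
  if p is y :: p' then adj_edge S e0 x y :: path_edges S e0 y p' else [::].

Lemma path_edgesP S e0 x p : path (adjS ends S) x p ->
  [/\ size (path_edges S e0 x p) = size p,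
      forall w, w \in zip (path_edges S e0 x p) (zip (x :: p) p) ->
        (ends w.1 == w.2) || (ends w.1 == (w.2.2, w.2.1)),
      {subset path_edges S e0 x p <= S},
      forall f, f \in path_edges S e0 x p -> (ends f).1 \in x :: p /\ (ends f).2 \in x :: p
    & uniq (x :: p) -> uniq (path_edges S e0 x p)].
Proof.
elim: p x => [|y p IH] x /=; first by split.
case/andP => adj pth; have [s1 s2 s3 s4 s5] := IH y pth.
have [f0S f0e] := adj_edgeP e0 adj.
split.
- by rewrite s1.
- by move=> w; rewrite inE => /orP [/eqP -> | /s2].
- by move=> f; rewrite inE => /orP [/eqP -> | /s3].
- move=> f; rewrite inE => /orP [/eqP -> | /s4 [h1 h2]].
    by case/orP: f0e => /eqP ->; rewrite /= !inE !eqxx ?orbT.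
  by split; rewrite in_cons ?h1 ?h2 orbT.
- rewrite inE negb_or => /andP [/andP [xy xp] uq].
  rewrite (s5 uq) andbT; apply/negP => /s4 [h1 h2].
  case/orP: f0e => /eqP he; rewrite he /= in h1 h2.
    by move: h1; rewrite inE (negbTE xy) (negbTE xp).
  by move: h2; rewrite inE (negbTE xy) (negbTE xp).
Qed.

Hypothesis ends_neq : forall e, (ends e).1 != (ends e).2.

(* A simple path of [S] from the head of [e] back to its tail, closed by [e];
   its gain is the defect of [e] with respect to any potential of [S]. *)
Lemma closing_circle (S : {set E}) e b : e \notin S -> potential S b ->
  connect (adjS ends S) (ends e).2 (ends e).1 ->
  exists vs es, circle_in ends (e |: S) vs es /\
    circle_gain ends phi vs es = phi e - (b (ends e).1 - b (ends e).2).
Proof.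
move=> eS hb /connectP [p0 pth0 hi].
have [p [pth uq lp]] : exists p, [/\ path (adjS ends S) (ends e).2 p,
    uniq ((ends e).2 :: p) & last (ends e).2 p = (ends e).1].
  by rewrite hi; case: (shortenP pth0) => p' ? ? _; exists p'.
have [s1 s2 s3 s4 s5] := path_edgesP e pth.
have pne : p != [::].
  by case: p lp {pth uq s1 s2 s3 s4 s5} => //= h; move: (ends_neq e); rewrite h eqxx.
set pes := path_edges S e (ends e).2 p.
have zipE : zip (rcons pes e) (zip ((ends e).2 :: p) (rot 1 ((ends e).2 :: p))) =
    rcons (zip pes (zip ((ends e).2 :: p) p)) (e, ((ends e).1, (ends e).2)).
  by rewrite rot1_cons zip_cons_rcons lp zip_rcons // size2_zip ?s1 //= leqnSn.
exists ((ends e).2 :: p), (rcons pes e); split.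
  split; first split.
  - by case: p pne {pth uq s1 s2 s3 s4 s5 lp zipE pes}.
  - by rewrite size_rcons s1.
  - exact: uq.
  - by rewrite rcons_uniq s5 // andbT; apply/negP => /s3; rewrite (negbTE eS).
  split; first by move=> f; rewrite mem_rcons !inE => /orP [-> //| /s3 ->]; rewrite orbT.
  move=> w; rewrite zipE mem_rcons inE => /orP [/eqP -> | /s2] //=.
  by rewrite -surjective_pairing eqxx.
rewrite (circle_gain_shift b); last by rewrite size_rcons s1.
rewrite zipE big_rcons /= big_seq big1 ?add0r.
  by rewrite /ogain -surjective_pairing eqxx.
case=> f [u v] xin; have fS := s3 _ (mem_zip1 xin).
by rewrite /= (ogain_potential hb fS (s2 _ xin)) subrr.
Qed.

Lemma balanced_potential S : balanced ends phi S -> exists b, potential S b.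
Proof.
elim: {S}_.+1 {-2}S (ltnSn #|S|) => // m IH S szS bal.
have [-> | [e eS]] := set_0Vmem S; first by exists (fun _ => 0) => f; rewrite inE.
set S' := S :\ e.
have [||b' hb'] := IH S'.
- by move: szS; rewrite (cardsD1 e S) eS.
- by apply: balancedS bal; apply: subsetDl.
have eS' : e \notin S' by rewrite setD11.
have SE : e |: S' = S by rewrite setD1K.
have extend b : potential S' b -> phi e = b (ends e).1 - b (ends e).2 -> potential S b.
  by move=> hb he f fS; case: (f =P e) => [-> //| /eqP fe]; apply: hb; rewrite !inE fe.
have [conn | nconn] := boolP (connect (adjS ends S') (ends e).2 (ends e).1).
  have [vs [es [circ g]]] := closing_circle eS' hb' conn.
  rewrite SE in circ; have := bal _ _ circ; rewrite g => /eqP; rewrite subr_eq0.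
  by move/eqP/(extend _ hb'); exists b'.
pose c := phi e - (b' (ends e).1 - b' (ends e).2).
exists (fun x => b' x + (if connect (adjS ends S') (ends e).1 x then c else 0)).
apply: extend; first exact: potential_shift.
have -> : connect (adjS ends S') (ends e).1 (ends e).2 = false.
  by apply/negbTE; rewrite adjS_connect_sym.
by rewrite connect0 /c; lra.
Qed.

End GainPotential.

Section AffineIndependence.
Variables (F : fieldType) (n d : nat) (Q : 'I_n -> 'rV[F]_d).

Definition points_mx : 'M[F]_(n, d) := \matrix_(i, k) Q i 0 k.

Lemma row_points_mx i : row i points_mx = Q i.
Proof. by apply/rowP => k; rewrite !mxE. Qed.

Hypothesis aQ : aff_indep Q.

Lemma aff_indep_mulmx_eq0 (v : 'rV_n) :
  v *m points_mx = 0 -> v *m (const_mx 1 : 'cV_n) = 0 -> v = 0.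
Proof.
rewrite !mulmx_sum_row => vQ v1; apply/rowP => i; rewrite mxE.
apply: (aQ (c := fun i => v 0 i)).
  have := congr1 (fun M : 'M_1 => M 0 0) v1; rewrite summxE !mxE => v1'.
  by rewrite -[RHS]v1'; apply: eq_bigr => j _; rewrite !mxE mulr1.
by rewrite -[RHS]vQ; apply: eq_bigr => j _; rewrite row_points_mx.
Qed.

Lemma aff_indep_inj : injective Q.
Proof.
move=> i j Qij; pose v : 'rV[F]_n := 'e_i - 'e_j.
have /(congr1 (fun w : 'rV_n => w 0 i)) : v = 0.
  apply: aff_indep_mulmx_eq0; rewrite mulmxBl -!rowE.
  - by rewrite !row_points_mx Qij subrr.
  - by rewrite !row_const subrr.
rewrite /v !mxE !eqxx /=; case: eqP => // _; rewrite subr0 => /eqP.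
by rewrite oner_eq0.
Qed.

Lemma aff_indep_row_free : row_free (row_mx points_mx (const_mx 1 : 'cV_n)).
Proof.
apply: inj_row_free => v; rewrite mul_mx_row -row_mx0 => /eq_row_mx [vQ v1].
exact: aff_indep_mulmx_eq0.
Qed.

Lemma aff_indep_size : (n <= d + 1)%N.
Proof. by rewrite -(eqP aff_indep_row_free) rank_leq_col. Qed.

Lemma aff_indep_affine_interp (c : 'I_n -> F) :
  exists (P : 'rV[F]_d) u, forall i, \sum_k P 0 k * Q i 0 k + u = c i.
Proof.
have full : row_full (row_mx points_mx (const_mx 1 : 'cV_n))^T.
  by rewrite /row_full mxrank_tr; exact: aff_indep_row_free.
have /submxP [D hD] := submx_full (\row_i c i) full.
rewrite -[D]hsubmxK tr_row_mx mul_row_col in hD.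
exists (lsubmx D), (rsubmx D 0 0) => i.
have /(congr1 (fun M : 'rV_n => M 0 i)) := hD; rewrite !mxE => ->.
rewrite big_ord1 !mxE mulr1; congr (_ + _).
by apply: eq_bigr => k _; rewrite !mxE.
Qed.

End AffineIndependence.

Section IncidenceRank.
Variables (F : fieldType) (n : nat) (T : {set 'I_n * 'I_n}).

Definition incidence_vec (p : 'I_n * 'I_n) : 'rV[F]_n := 'e_p.2 - 'e_p.1.

Definition incidence_mx : 'M[F]_n := (\sum_(p in T) <<incidence_vec p>>)%MS.

Let r x y := ((x, y) \in T) || ((y, x) \in T).

Let r_sym : connect_sym r.
Proof. by apply: sym_connect_sym => x y; rewrite /r orbC. Qed.

Let roots_r := [set x | fingraph.roots r x].

Let root_in x : fingraph.root r x \in roots_r.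
Proof. by rewrite inE fingraph.roots_root. Qed.

Let root_enum_val (k : 'I_#|roots_r|) : fingraph.root r (enum_val k) = enum_val k.
Proof. by have := enum_valP k; rewrite inE => /eqP. Qed.

Lemma ncomp_card_roots : ncomp (fun x y => (x, y) \in T) = #|roots_r|.
Proof. by apply: eq_card => x; rewrite !inE andbT. Qed.

Definition component_mx : 'M[F]_(#|roots_r|, n) :=
  \matrix_(k, x) (fingraph.root r x == enum_val k)%:R.

Lemma row_free_component_mx : row_free component_mx.
Proof.
apply: inj_row_free => y h; apply/rowP => k.
have /(congr1 (fun M : 'rV_n => M 0 (enum_val k))) := h; rewrite !mxE => <-.
rewrite (bigD1 k) //= !mxE root_enum_val eqxx mulr1 big1 ?addr0 // => k' nk.
rewrite !mxE root_enum_val; case: eqP => [/enum_val_inj hk | _]; last by rewrite mulr0.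
by rewrite hk eqxx in nk.
Qed.

Lemma incidence_orthogonal_connect (w : 'rV[F]_n) x y :
  w *m incidence_mx^T = 0 -> connect r x y -> w 0 x = w 0 y.
Proof.
move=> hw; have step p : p \in T -> w 0 p.1 = w 0 p.2.
  move=> pT; have sub : (incidence_vec p <= incidence_mx)%MS.
    by apply: (sumsmx_sup p) => //; rewrite genmxE.
  have [X hX] := submxP sub.
  have /(congr1 (fun M : 'M_1 => M 0 0)) : incidence_vec p *m w^T = 0.
    by rewrite hX -mulmxA -[_ *m w^T]trmxK trmx_mul trmxK hw trmx0 mulmx0.
  by rewrite mulmxBl -!rowE !mxE => /eqP; rewrite subr_eq0 => /eqP.
case/connectP => p + -> {y}; elim: p x => [|z p IH] x //=.
by case/andP => /orP [] /step hz /IH <-; rewrite ?hz.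
Qed.

Lemma component_mx_ker : (component_mx == kermx incidence_mx^T)%MS.
Proof.
apply/andP; split.
  apply/sub_kermxP; apply: trmx_inj; rewrite trmx_mul trmxK trmx0.
  apply/sub_kermxP/sumsmx_subP => p pT; rewrite genmxE; apply/sub_kermxP.
  rewrite mulmxBl -!rowE; apply/eqP; rewrite subr_eq0; apply/eqP/rowP => k.
  rewrite !mxE; have /(fingraph.rootP r_sym) -> // : connect r p.1 p.2.
  by apply: connect1; rewrite /r -surjective_pairing pT.
apply/row_subP => q; set w := row q _.
have /sub_kermxP hw : (w <= kermx incidence_mx^T)%MS by exact: row_sub.
clearbody w; apply/submxP; exists (\row_k w 0 (enum_val k)); apply/rowP => x.
rewrite !mxE (bigD1 (enum_rank_in (root_in x) (fingraph.root r x))) //= !mxE.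
rewrite enum_rankK_in // eqxx mulr1 big1 ?addr0.
  exact: (incidence_orthogonal_connect hw (fingraph.connect_root _ x)).
move=> k nk; rewrite !mxE; case: eqP => [hk | _]; last by rewrite mulr0.
by case/negP: nk; apply/eqP/enum_val_inj; rewrite enum_rankK_in.
Qed.

Lemma rank_incidence_mx :
  \rank incidence_mx = (n - ncomp (fun x y => (x, y) \in T))%N.
Proof.
have := mxrank_ker incidence_mx^T.
rewrite -(eqmx_rank component_mx_ker) (eqP row_free_component_mx) mxrank_tr.
by rewrite ncomp_card_roots => ->; rewrite subKn // rank_leq_row.
Qed.

End IncidenceRank.

Section IdealGeneralPosition.
Variables (F : fieldType) (n d : nat) (Q : 'I_n -> 'rV[F]_d).
Hypothesis aQ : aff_indep Q.

Lemma incidence_mul_points_mx (T : {set 'I_n * 'I_n}) :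
  (incidence_mx F T *m points_mx Q :=: \sum_(p in T) <<Q p.2 - Q p.1>>)%MS.
Proof.
apply: eqmx_trans (sumsmxMr_gen _ _ _) _; apply: eqmx_sums => p _.
apply: eqmx_trans (genmxE _) _; apply: eqmx_trans (eqmxMr _ (genmxE _)) _.
by rewrite mulmxBl -!rowE !row_points_mx; apply/eqmx_sym/genmxE.
Qed.

(* The incidence space consists of sum-zero vectors, on which [v |-> v Q]
   is injective by affine independence. *)
Lemma rank_directions (T : {set 'I_n * 'I_n}) :
  \rank (\sum_(p in T) <<Q p.2 - Q p.1>>)%MS
    = (n - ncomp (fun x y => (x, y) \in T))%N.
Proof.
rewrite -(rank_incidence_mx F T) -(incidence_mul_points_mx T).
have sum0 : (incidence_mx F T <= kermx (const_mx 1 : 'cV[F]_n))%MS.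
  apply/sumsmx_subP => p _; rewrite genmxE; apply/sub_kermxP.
  by rewrite mulmxBl -!rowE !row_const subrr.
have /eqP cap0 : \rank (incidence_mx F T :&: kermx (points_mx Q)) == 0%N.
  rewrite mxrank_eq0; apply/eqP/row_matrixP => i; rewrite row0.
  have := row_sub i (incidence_mx F T :&: kermx (points_mx Q))%MS.
  rewrite sub_capmx => /andP [vU vQ].
  by apply: (aff_indep_mulmx_eq0 aQ); apply/sub_kermxP; last exact: submx_trans vU sum0.
by have := mxrank_mul_ker (incidence_mx F T) (points_mx Q); rewrite cap0 addn0.
Qed.

Lemma aff_indep_ideal_gen_pos : ideal_gen_pos Q.
Proof.
split=> [|T _]; first exact: aff_indep_inj aQ.
rewrite rank_directions; apply/esym/minn_idPl.
by rewrite -rank_directions rank_leq_col.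
Qed.

End IdealGeneralPosition.

Section Realization.
Variables (R : realType) (n d : nat) (Q : 'I_n -> 'rV[R]_d).
Hypothesis aQ : aff_indep Q.

Lemma sqnormB (P q : 'rV[R]_d) :
  sqnorm (P - q) = sqnorm P - 2 * \sum_k P 0 k * q 0 k + sqnorm q.
Proof.
rewrite /sqnorm mulr_sumr -sumrB -big_split /=.
by apply: eq_bigr => k _; rewrite !mxE; ring.
Qed.

Definition sqdist (P : 'rV[R]_d) (i : 'I_n) := sqnorm (P - Q i).

Lemma aff_indep_sqdist (b : 'I_n -> R) : exists P t, forall i, sqdist P i = b i + t.
Proof.
have [P [u hP]] := aff_indep_affine_interp aQ (fun i => (sqnorm (Q i) - b i) / 2).
exists P, (sqnorm P + 2 * u) => i.
rewrite /sqdist sqnormB -[\sum_k _](addrK u) hP.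
by field.
Qed.

Variables (E : finType) (ends : E -> 'I_n * 'I_n) (phi : E -> R).
Hypothesis ends_neq : forall e, (ends e).1 != (ends e).2.

Lemma hyp_sqdist e P :
  hyp ends phi Q e P <-> phi e = sqdist P (ends e).1 - sqdist P (ends e).2.
Proof. by rewrite /hyp /psi; split => ->. Qed.

Lemma hyps_potential (S : {set E}) P :
  (forall e, e \in S -> hyp ends phi Q e P) <-> potential ends phi S (sqdist P).
Proof. by split => h e eS; apply/hyp_sqdist/h. Qed.

Lemma flat_rank_le (S : {set E}) : (flat_rank ends S <= d)%N.
Proof.
have := aff_indep_size aQ; rewrite /flat_rank.
have [n0 | n_gt0] := posnP n; first lia.
by have := ncomp_gt0 (adjS ends S) (Ordinal n_gt0); lia.
Qed.

Lemma edges_of_balanced_flat s P0 : s P0 ->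
  balanced_flat ends phi [set e | `[< edges_of ends phi Q s e >]].
Proof.
move=> sP0; set S := [set e | _].
have potS P : s P -> potential ends phi S (sqdist P).
  by move=> sP; apply/hyps_potential => e; rewrite inE => /asboolP; apply.
split=> [|e eS conn bal]; first exact: potential_balanced (potS P0 sP0).
have [vs [es [circ g]]] := closing_circle ends_neq eS (potS P0 sP0)
  (etrans (adjS_connect_sym _ _ _ _) conn).
move: (bal vs es circ) g => -> g.
case/negP: eS; rewrite inE; apply/asboolP => P sP; apply/hyp_sqdist.
by have := potential_connect (potS P sP) (potS P0 sP0) conn; lra.
Qed.

Lemma balanced_hyps_meet (S : {set E}) : balanced ends phi S ->
  exists P, forall e, e \in S -> hyp ends phi Q e P.
Proof.
case/(balanced_potential ends_neq) => b hb; have [P [t hP]] := aff_indep_sqdist b.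
by exists P; apply/hyps_potential => e eS; rewrite !hP (hb e eS); lra.
Qed.

(* Shift the potential by [1] on the component of the tail of [e]. *)
Lemma hyps_separate (S : {set E}) e P0 :
  (forall f, f \in S -> hyp ends phi Q f P0) ->
  ~~ connect (adjS ends S) (ends e).1 (ends e).2 ->
  exists P, (forall f, f \in S -> hyp ends phi Q f P) /\
    sqdist P (ends e).1 - sqdist P (ends e).2 =
    sqdist P0 (ends e).1 - sqdist P0 (ends e).2 + 1.
Proof.
move=> /hyps_potential h0 nconn.
have [P [t hP]] := aff_indep_sqdist
  (fun x => sqdist P0 x + (if connect (adjS ends S) (ends e).1 x then 1 else 0)).
exists P; split.
  apply/hyps_potential => f fS; rewrite !hP (potential_shift (ends e).1 1 h0 fS).
  by set u := (if _ then _ else _); set v := (if _ then _ else _); lra.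
by rewrite !hP connect0 (negbTE nconn); lra.
Qed.

Lemma balanced_flat_realized (S : {set E}) : balanced_flat ends phi S ->
  exists s, inL ends phi Q s /\ (forall e, e \in S <-> edges_of ends phi Q s e).
Proof.
move=> [bal closed]; have [P0 hP0] := balanced_hyps_meet bal.
have /hyps_potential potP0 := hP0.
exists (fun P => forall e, e \in S -> hyp ends phi Q e P).
split; first by split; [exists S | exists P0].
move=> e; split=> [eS P hP | hE]; first exact: hP.
apply/negPn/negP => eS; have he0 := hyp_sqdist e P0; have := hE P0 hP0.
have [conn | nconn] := boolP (connect (adjS ends S) (ends e).1 (ends e).2).
  move=> /he0 hE0; apply: (closed e eS conn); apply: (potential_balanced (b := sqdist P0)).
  by move=> f; rewrite !inE => /orP [/eqP -> // | /potP0].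
have [P [hP dP]] := hyps_separate hP0 nconn.
by move/he0 => hE0; move/hyp_sqdist: (hE P hP); lra.
Qed.

Lemma inL_edges_of_le s t : inL ends phi Q s ->
  (forall P, t P -> s P) <-> (forall e, edges_of ends phi Q s e -> edges_of ends phi Q t e).
Proof.
move=> [[F hF] _]; split=> [ts e he P tP | he P tP]; first exact: he P (ts P tP).
by apply/hF => e eF; apply: (he e _ P tP) => P' /hF; apply.
Qed.

Lemma aff_indep_gen_pos_wrt : gen_pos_wrt ends phi Q.
Proof.
split=> [s [_ [P0 sP0]] | S flat _ | s t sL _]; last exact: inL_edges_of_le.
  exists [set e | `[< edges_of ends phi Q s e >]]; split.
  - by move=> e; rewrite inE; split => /asboolP.
  - by split; [exact: edges_of_balanced_flat sP0 | exact: flat_rank_le].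
exact: balanced_flat_realized.
Qed.

End Realization.

Theorem proposition6p9 (R : realType) (d n : nat) (Q : 'I_n -> 'rV[R]_d) :
  aff_indep Q ->
  ideal_gen_pos Q /\
  (forall (E : finType) (ends : E -> 'I_n * 'I_n) (phi : E -> R),
     (forall e, (ends e).1 != (ends e).2) ->
     gen_pos_wrt ends phi Q).
Proof.
move=> aQ; split; first exact: aff_indep_ideal_gen_pos.
by move=> E ends phi; exact: aff_indep_gen_pos_wrt.
Qed.
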